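(* Let $\mathcal{K}$ be a Hilbert space, let $A$ be a closable, densely defined operator in $\mathcal{K}$ with closure $\bar A$ and adjoint $A^*$, and let $A_0$ be an operator in $\mathcal{K}$ with $A_0\subseteq A^*$ (so $A_0$ is closable; $\bar A_0$ denotes its closure). Suppose there exists a sequence $(T_n)_{n=0}^\infty\subseteq\mathbf{B}(\mathcal{K})$ such that $T_n\to I_\mathcal{K}$ in the weak operator topology as $n\to\infty$, $$\mathcal{R}(T_n)\subseteq\mathcal{D}(\bar A),\qquad \mathcal{R}(T_n^* )\subseteq\mathcal{D}(\bar A_0),\qquad n\in\mathbb{N},$$ and $$\sup_{n\in\mathbb{N}}\|\bar AT_n-T_n\bar A\|<+\infty.$$ Then $\bar A_0=A^*$.
   Context: $\mathbf{B}(\mathcal{K})$ denotes the space of all bounded linear operators defined on the whole of $\mathcal{K}$. $\mathcal{D}(S)$ and $\mathcal{R}(S)$ denote the domain and range of an operator $S$. Sums and products of unbounded operators are taken with their natural (maximal) domains, e.g. $\mathcal{D}(\bar AT_n-T_n\bar A)=\{f\in\mathcal{D}(\bar A): T_nf\in\mathcal{D}(\bar A)\}$. For a (not necessarily everywhere defined) operator $S$, $\|S\|=\sup\{\|Sf\|: f\in\mathcal{D}(S),\ \|f\|\le 1\}$. *)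

From HB Require Import structures.
From mathcomp Require Import all_boot all_order all_algebra.
From mathcomp Require Import reals.
From mathcomp Require Export complex.
Set Implicit Arguments. Unset Strict Implicit. Unset Printing Implicit Defensive.
Import Order.TTheory GRing.Theory Num.Theory.
Local Open Scope ring_scope.

Section Hilbert.
Variables (R : realType) (V : lmodType R[i]) (ip : V -> V -> R[i]).

Definition cmod (z : R[i]) : R := Num.sqrt (complex.Re z ^+ 2 + complex.Im z ^+ 2).

(* complex inner product, linear in the first argument *)
Definition is_inner_product : Prop :=
  [/\ (forall a x y z, ip (a *: x + y) z = a * ip x z + ip y z),
      (forall x y, ip y x = conjc (ip x y)),
      (forall x, complex.Im (ip x x) = 0 /\ 0 <= complex.Re (ip x x)) &
      (forall x, ip x x = 0 -> x = 0)].

Definition hnorm (x : V) : R := Num.sqrt (complex.Re (ip x x)).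

Definition hcvg (u : nat -> V) (l : V) : Prop :=
  forall eps : R, 0 < eps -> exists N, forall n, (N <= n)%N -> hnorm (u n - l) < eps.

Definition hcauchy (u : nat -> V) : Prop :=
  forall eps : R, 0 < eps -> exists N, forall m n, (N <= m)%N -> (N <= n)%N ->
    hnorm (u m - u n) < eps.

Definition hcomplete : Prop := forall u, hcauchy u -> exists l, hcvg u l.

(* a (not necessarily everywhere defined) operator in V: domain + action;
   the action outside the domain is irrelevant *)
Record op := Op { dom : V -> Prop; app : V -> V }.

Definition linear_op (A : op) : Prop :=
  [/\ dom A 0,
      (forall x y, dom A x -> dom A y -> dom A (x + y) /\ app A (x + y) = app A x + app A y) &
      (forall a x, dom A x -> dom A (a *: x) /\ app A (a *: x) = a *: app A x)].

Definition op_sub (A B : op) : Prop :=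
  forall x, dom A x -> dom B x /\ app B x = app A x.

Definition op_eq (A B : op) : Prop := op_sub A B /\ op_sub B A.

Definition densely_defined (A : op) : Prop :=
  forall x eps, 0 < eps -> exists y, dom A y /\ hnorm (x - y) < eps.

Definition in_graph_closure (A : op) (x y : V) : Prop :=
  forall eps : R, 0 < eps -> exists u, dom A u /\ hnorm (x - u) < eps /\ hnorm (y - app A u) < eps.

(* B is the closure of A: graph(B) = closure of graph(A); the existence of such
   a B is exactly closability of A *)
Definition is_closure (A B : op) : Prop :=
  forall x y, (dom B x /\ app B x = y) <-> in_graph_closure A x y.

Definition is_adjoint (A B : op) : Prop :=
  forall y z, (dom B y /\ app B y = z) <-> (forall x, dom A x -> ip (app A x) y = ip x z).

Definition bounded_op (T : V -> V) : Prop :=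
  [/\ (forall x y, T (x + y) = T x + T y),
      (forall (a : R[i]) x, T (a *: x) = a *: T x) &
      exists M : R, forall x, hnorm (T x) <= M * hnorm x].
End Hilbert.

(* Since A^* is closed and A0 is contained in A^*, so is the closure of A0.
   Conversely, let y be in dom A^*.  Projecting (y, A^* y) onto the closed graph
   of the closure of A0 in K x K gives y0 in its domain such that y1 := y - y0
   satisfies <y1, z> + <A^* y1, A0 z> = 0 for every z in dom (closure A0).
   Take z = T_n^* y1: the first term tends to |y1|^2.  By the commutator bound
   and the uniform boundedness principle the sequence A^* T_n^* y1 is bounded,
   and on the dense set dom (closure A) it converges weakly to A^* y1; so the
   second term tends to |A^* y1|^2.  Hence y1 = 0. *)
From HB Require Import structures.
From mathcomp Require Import all_boot all_order all_algebra.
From mathcomp Require Import reals complex.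
From mathcomp Require Import ring lra boolp classical_sets.
Import Order.TTheory GRing.Theory Num.Theory.
Local Open Scope ring_scope.
Local Open Scope complex_scope.

Section ComplexModulus.
Context {R : realType}.
Implicit Types (z w : R[i]) (r : R).

Lemma cmodE z : (cmod z)%:C = `|z|.
Proof. by rewrite normc_def. Qed.

Lemma cmod_ge0 z : 0 <= cmod z.
Proof. by rewrite /cmod sqrtr_ge0. Qed.

Lemma cmodD z w : cmod (z + w) <= cmod z + cmod w.
Proof. by rewrite -lecR rmorphD /= !cmodE ler_normD. Qed.

Lemma cmodN z : cmod (- z) = cmod z.
Proof. by apply: complexI; rewrite !cmodE normrN. Qed.

Lemma cmodB z w : cmod (z - w) <= cmod z + cmod w.
Proof. by rewrite -(cmodN w) cmodD. Qed.

Lemma cmodJ z : cmod (conjc z) = cmod z.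
Proof. by apply: complexI; rewrite !cmodE normcJ. Qed.

Lemma cmodR r : cmod r%:C = `|r|.
Proof. by rewrite /cmod /= expr0n /= addr0 sqrtr_sqr. Qed.

Lemma cmod0 : cmod (0 : R[i]) = 0.
Proof. by rewrite (cmodR 0) normr0. Qed.

Lemma cmod_sqr z : (cmod z ^+ 2)%:C = z * conjc z.
Proof. by rewrite rmorphXn /= cmodE sqr_normc. Qed.

Lemma ReD z w : complex.Re (z + w) = complex.Re z + complex.Re w.
Proof. by case: z; case: w. Qed.

Lemma ReN z : complex.Re (- z) = - complex.Re z.
Proof. by case: z. Qed.

Lemma ReJ z : complex.Re (conjc z) = complex.Re z.
Proof. by case: z. Qed.

Lemma Re_le_cmod z : complex.Re z <= cmod z.
Proof.
rewrite /cmod; apply: le_trans (ler_norm _) _.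
by rewrite -sqrtr_sqr ler_wsqrtr // lerDl sqr_ge0.
Qed.

Lemma cmod_le_eq0 z : (forall eps, 0 < eps -> cmod z <= eps) -> z = 0.
Proof.
move=> h; apply/eqP; rewrite -normr_eq0 -cmodE; apply/eqP; congr _%:C.
apply: le_anti; rewrite cmod_ge0 andbT; apply/ler_addgt0Pr => e e0.
by rewrite add0r h.
Qed.

Lemma eq0_of_linear_le_sqr r (Q : R) : 0 <= Q ->
  (forall s : R, 2 * s * r <= s ^+ 2 * Q) -> r = 0.
Proof.
move=> Q0 /(_ (r / (Q + 1))); set u := (Q + 1)^-1 => hr.
have u0 : 0 < u by rewrite invr_gt0; lra.
have uQ : u * (Q + 1) = 1 by rewrite mulVf //; lra.
have r2u : r ^+ 2 * u <= 0.
  have e : (r * u) ^+ 2 * Q = r ^+ 2 * u * (u * Q) by ring.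
  have uQ' : u * Q = 1 - u by lra.
  rewrite e uQ' in hr; have := sqr_ge0 r; nra.
have r2 : r ^+ 2 <= 0 by rewrite -(pmulr_lle0 _ u0).
by apply/eqP; rewrite -sqrf_eq0 eq_le r2 sqr_ge0.
Qed.

Definition ccv (a : nat -> R[i]) (l : R[i]) := forall eps, 0 < eps ->
  exists M, forall n, (M <= n)%N -> cmod (a n - l) < eps.

Lemma ccv_bounded {a l} : ccv a l -> exists K, forall n, cmod (a n) <= K.
Proof.
move=> /(_ 1 ltr01) [M hM].
exists (\sum_(i < M) cmod (a i) + cmod l + 1) => n.
have s0 : 0 <= \sum_(i < M) cmod (a i) by apply: sumr_ge0 => i _; exact: cmod_ge0.
have [nM|Mn] := ltnP n M.
  have := cmod_ge0 l; have : cmod (a n) <= \sum_(i < M) cmod (a i).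
    by rewrite (bigD1 (Ordinal nM)) //= lerDl sumr_ge0 // => i _; exact: cmod_ge0.
  lra.
by have := hM n Mn; have := cmodD (a n - l) l; rewrite subrK; lra.
Qed.

Lemma ccv_add_eq0 {a b la lb} : ccv a la -> ccv b lb ->
  (forall n, a n + b n = 0) -> la + lb = 0.
Proof.
move=> ha hb hab; apply: cmod_le_eq0 => e e0.
have e2 : 0 < e / 2 by rewrite divr_gt0.
have [M1 h1] := ha _ e2; have [M2 h2] := hb _ e2; set n := (M1 + M2)%N.
have -> : la + lb = - ((a n - la) + (b n - lb)).
  by rewrite -[RHS]add0r -(hab n); ring.
rewrite cmodN; have := cmodD (a n - la) (b n - lb).
by have := h1 n (leq_addr _ _); have := h2 n (leq_addl _ _); lra.
Qed.

End ComplexModulus.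

Lemma exists_inv_nat_lt {R : realType} {eps : R} : 0 < eps ->
  exists K, forall m, (K <= m)%N -> m.+1%:R^-1 < eps.
Proof.
move=> e0; exists (Num.truncn eps^-1) => m Km.
rewrite -[eps]invrK ltf_pV2 ?posrE ?invr_gt0 ?ltr0n //.
by rewrite (lt_le_trans (truncnS_gt _)) // ler_nat ltnS.
Qed.

Lemma hnorm_ge0 {R : realType} {V : lmodType R[i]} (ip : V -> V -> R[i]) x :
  0 <= hnorm ip x.
Proof. exact: sqrtr_ge0. Qed.

Section InnerProduct.
Context {R : realType} {V : lmodType R[i]} {ip : V -> V -> R[i]}.
Hypothesis Hip : is_inner_product ip.
Local Notation N := (hnorm ip).
Implicit Types (p q x y z : V) (t : R[i]).

Definition subspace (S : V -> Prop) :=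
  S 0 /\ forall t x y, S x -> S y -> S (t *: x + y).

Definition in_closure (S : V -> Prop) q :=
  forall eps, 0 < eps -> exists2 u, S u & N (q - u) < eps.

Lemma ipDl x y z : ip (x + y) z = ip x z + ip y z.
Proof. by case: Hip => l _ _ _; rewrite -[ip x z]mul1r -l scale1r. Qed.

Lemma ip0l z : ip 0 z = 0.
Proof. by apply: (addrI (ip 0 z)); rewrite -ipDl !addr0. Qed.

Lemma ipZl t x z : ip (t *: x) z = t * ip x z.
Proof. by case: Hip => l _ _ _; rewrite -[t *: x]addr0 l ip0l addr0. Qed.

Lemma ipC x y : ip y x = conjc (ip x y).
Proof. by case: Hip. Qed.

Lemma ipNl x z : ip (- x) z = - ip x z.
Proof. by rewrite -scaleN1r ipZl mulN1r. Qed.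

Lemma ipBl x y z : ip (x - y) z = ip x z - ip y z.
Proof. by rewrite ipDl ipNl. Qed.

Lemma ip0r z : ip z 0 = 0.
Proof. by rewrite ipC ip0l conjc0. Qed.

Lemma ipDr x y z : ip z (x + y) = ip z x + ip z y.
Proof. by rewrite ipC ipDl rmorphD /= -!ipC. Qed.

Lemma ipZr t x z : ip z (t *: x) = conjc t * ip z x.
Proof. by rewrite ipC ipZl rmorphM /= -ipC. Qed.

Lemma ipNr x z : ip z (- x) = - ip z x.
Proof. by rewrite ipC ipNl rmorphN /= -ipC. Qed.

Lemma ipBr x y z : ip z (x - y) = ip z x - ip z y.
Proof. by rewrite ipDr ipNr. Qed.

Lemma ipxx x : ip x x = (N x ^+ 2)%:C.
Proof.
case: Hip => _ _ /(_ x) [Im0 Re0] _; rewrite sqr_sqrtr //.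
by case: (ip x x) Im0 => a b /= ->.
Qed.

Lemma hnorm_eq0 x : N x = 0 -> x = 0.
Proof. by case: Hip => _ _ _ ip_eq0 N0; apply: ip_eq0; rewrite ipxx N0 expr0n. Qed.

Lemma hnorm0 : N 0 = 0.
Proof. by rewrite /hnorm ip0l sqrtr0. Qed.

Lemma hnormZ t x : N (t *: x) = cmod t * N x.
Proof.
apply/eqP; rewrite -(eqrXn2 (n := 2)) ?mulr_ge0 ?hnorm_ge0 ?cmod_ge0 //.
apply/eqP/complexI; rewrite -ipxx ipZl ipZr ipxx exprMn [RHS]rmorphM /= cmod_sqr.
by rewrite mulrA [t * _]mulrC.
Qed.

Lemma hnormN x : N (- x) = N x.
Proof. by rewrite -scaleN1r hnormZ cmodN (cmodR 1) normr1 mul1r. Qed.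

Lemma hnormB x y : N (x - y) = N (y - x).
Proof. by rewrite -hnormN opprB. Qed.

Lemma hnormD_sqr x y :
  N (x + y) ^+ 2 = N x ^+ 2 + N y ^+ 2 + 2 * complex.Re (ip x y).
Proof.
have Nsq u : N u ^+ 2 = complex.Re (ip u u) by rewrite ipxx.
by rewrite !Nsq ipDl !ipDr !ReD (ipC x y) ReJ; lra.
Qed.

Lemma cauchy_schwarz x y : cmod (ip x y) <= N x * N y.
Proof.
have [y0|y_neq0] := eqVneq (N y) 0.
  by rewrite (hnorm_eq0 _ y0) ip0r cmod0 hnorm0 mulr0.
set p := ip x y; set q := N y ^+ 2.
have q_gt0 : 0 < q by rewrite exprn_gt0 // lt_neqAle eq_sym y_neq0 hnorm_ge0.
(* Pythagoras for the component of x orthogonal to y *)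
have pyth : (N (x - (p * q^-1%:C) *: y) ^+ 2)%:C = (N x ^+ 2 - cmod p ^+ 2 / q)%:C.
  rewrite -ipxx ipBl !ipBr !ipZl !ipZr ipxx (ipxx y) -/q (ipC x y) -/p.
  have cj : conjc (p * q^-1%:C) = conjc p * q^-1%:C by rewrite rmorphM /= -conjc_real.
  rewrite cj rmorphB /= [(_ / q)%:C]rmorphM /= fmorphV /= cmod_sqr.
  by field; apply/eqP => /complexI; apply/eqP; rewrite gt_eqF.
have : 0 <= N x ^+ 2 - cmod p ^+ 2 / q by rewrite -(complexI pyth) sqr_ge0.
rewrite subr_ge0 ler_pdivrMr // /q -exprMn.
by rewrite ler_pXn2r ?nnegrE ?mulr_ge0 ?hnorm_ge0 ?cmod_ge0.
Qed.

Lemma cmod_ip_le {x y a b} : N x <= a -> N y <= b -> cmod (ip x y) <= a * b.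
Proof. by move=> xa yb; rewrite (le_trans (cauchy_schwarz x y)) ?ler_pM ?hnorm_ge0. Qed.

Lemma hnormD x y : N (x + y) <= N x + N y.
Proof.
rewrite -(ler_pXn2r (n := 2)) ?nnegrE ?addr_ge0 ?hnorm_ge0 // hnormD_sqr.
by have := Re_le_cmod (ip x y); have := cauchy_schwarz x y; lra.
Qed.

Lemma hnormB_trans x y z : N (x - z) <= N (x - y) + N (y - z).
Proof. by have := hnormD (x - y) (y - z); rewrite addrA subrK. Qed.

Lemma hnormB_scale_sqr x z t : N (x - t *: z) ^+ 2 =
  N x ^+ 2 + cmod t ^+ 2 * N z ^+ 2 - 2 * complex.Re (conjc t * ip x z).
Proof.
by rewrite hnormD_sqr hnormN hnormZ ipNr ipZr ReN; lra.
Qed.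

Lemma parallelogram x y :
  N (x - y) ^+ 2 + N (x + y) ^+ 2 = 2 * N x ^+ 2 + 2 * N y ^+ 2.
Proof.
by rewrite !hnormD_sqr hnormN ipNr ReN; lra.
Qed.

Lemma hnorm_midpoint x y p : N (x - y) ^+ 2 + 4 * N (p - 2^-1 *: (x + y)) ^+ 2 =
  2 * N (p - x) ^+ 2 + 2 * N (p - y) ^+ 2.
Proof.
have two_neq0 : (2 : R[i]) != 0 by rewrite pnatr_eq0.
have diff : (p - x) - (p - y) = y - x by rewrite opprB [LHS]addrC addrA subrK.
have mid : (p - x) + (p - y) = 2 *: (p - 2^-1 *: (x + y)).
  rewrite scalerBr scalerA mulfV // scale1r scaler_nat mulr2n opprD.
  by rewrite addrACA.
have cmod2 : cmod (2 : R[i]) = 2.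
  have -> : (2 : R[i]) = (2 : R)%:C by rewrite rmorph_nat.
  by rewrite cmodR ger0_norm.
rewrite -parallelogram diff mid hnormZ cmod2.
by rewrite hnormB; lra.
Qed.

Lemma orthogonal_of_min_dist x z :
  (forall t, N x <= N (x - t *: z)) -> ip x z = 0.
Proof.
move=> xmin.
have le t : 2 * complex.Re (conjc t * ip x z) <= cmod t ^+ 2 * N z ^+ 2.
  have := xmin t; rewrite -(ler_pXn2r (n := 2)) ?nnegrE ?hnorm_ge0 //.
  by rewrite hnormB_scale_sqr; lra.
have cmod_sqrE (t : R[i]) : cmod t ^+ 2 = complex.Re t ^+ 2 + complex.Im t ^+ 2.
  by rewrite sqr_sqrtr // addr_ge0 ?sqr_ge0.
case E: (ip x z) le => [a b] le.
have a0 : a = 0.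
  apply: (eq0_of_linear_le_sqr _ _ (sqr_ge0 (N z))) => s.
  by have := le s%:C; rewrite cmod_sqrE /=; lra.
have b0 : b = 0.
  apply: (eq0_of_linear_le_sqr _ _ (sqr_ge0 (N z))) => s.
  by have := le (0 +i* s); rewrite cmod_sqrE /=; lra.
by rewrite a0 b0.
Qed.

Section Density.
Context {B : op V}.
Hypothesis B_dense : densely_defined ip B.

Lemma hnorm_le_of_dense u c : 0 <= c ->
  (forall x, dom B x -> cmod (ip x u) <= c * N x) -> N u <= c.
Proof.
move=> c0 bound.
have sqr_le : N u ^+ 2 <= c * N u.
  apply/ler_addgt0Pr => e e0; set d := c + N u + 1.
  have d0 : 0 < d by rewrite /d; have := hnorm_ge0 ip u; lra.
  have [x [Bx ux]] := B_dense u _ (divr_gt0 e0 d0).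
  have split_uu : ip u u = ip x u + ip (u - x) u by rewrite ipBl addrC subrK.
  have uu : N u ^+ 2 <= c * N x + e / d * N u.
    rewrite -[N u ^+ 2]ger0_norm ?sqr_ge0 // -cmodR -ipxx split_uu.
    apply: le_trans (cmodD _ _) (lerD (bound x Bx) _).
    exact: cmod_ip_le (ltW ux) (lexx _).
  have xu : c * N x <= c * (N u + e / d).
    by rewrite ler_wpM2l //; have := hnormD u (x - u); rewrite addrC subrK hnormB; lra.
  have ed : e / d * (c + N u) <= e by rewrite mulrAC ler_pdivrMr /d //; nra.
  nra.
by have := hnorm_ge0 ip u; nra.
Qed.

Lemma ccv_ip_of_dense {u : nat -> V} {v K} : (forall n, N (u n) <= K) ->
  (forall x, dom B x -> ccv (fun n => ip x (u n)) (ip x v)) ->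
  forall y, ccv (fun n => ip y (u n)) (ip y v).
Proof.
move=> uK cvg_dense y eps e0; set d := K + N v + 1.
have d0 : 0 < d by rewrite /d; have := le_trans (hnorm_ge0 ip _) (uK 0%N); have := hnorm_ge0 ip v; lra.
have e3 : 0 < eps / 3 by rewrite divr_gt0.
have [x [Bx yx]] := B_dense y _ (divr_gt0 e3 d0).
have [M hM] := cvg_dense x Bx (eps / 3) e3.
exists M => n /hM xn.
have -> : ip y (u n) - ip y v = ip (y - x) (u n) + (ip x (u n) - ip x v) - ip (y - x) v.
  by rewrite !ipBl; ring.
have k1 := cmod_ip_le (ltW yx) (uK n).
have k2 := cmod_ip_le (ltW yx) (lexx (N v)).
have k3 := cmodD (ip (y - x) (u n)) (ip x (u n) - ip x v).
have k4 := cmodB (ip (y - x) (u n) + (ip x (u n) - ip x v)) (ip (y - x) v).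
have k5 : eps / 3 / d * K + eps / 3 / d * N v <= eps / 3.
  by rewrite -mulrDr mulrAC ler_pdivrMr // /d; have := hnorm_ge0 ip v; nra.
lra.
Qed.

End Density.

Section Complete.
Hypothesis Hcompl : hcomplete ip.

Lemma nested_balls_meet (c : nat -> V) (r : nat -> R) :
  (forall k, 0 <= r k) -> (forall k, N (c k.+1 - c k) + r k.+1 <= r k) ->
  (forall k, r k <= k.+1%:R^-1) -> exists l, forall k, N (l - c k) <= r k.
Proof.
move=> r0 nested r_small.
have nest k j : N (c (j + k)%N - c k) + r (j + k)%N <= r k.
  elim: j => [|j IH]; first by rewrite add0n subrr hnorm0 add0r.
  have := nested (j + k)%N; have := hnormB_trans (c (j + k).+1) (c (j + k)%N) (c k).
  by rewrite addSn; lra.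
have nest_ge k m : (k <= m)%N -> N (c m - c k) <= r k.
  by move=> km; have := nest k (m - k)%N; rewrite subnK // => h; have := r0 m; lra.
have [l cvg_l] : exists l, hcvg ip c l.
  apply: Hcompl => eps e0.
  have e2 : 0 < eps / 2 by rewrite divr_gt0.
  have [K hK] := exists_inv_nat_lt e2.
  exists K => m n Km Kn; have := hK K (leqnn K); have := r_small K.
  have := nest_ge K m Km; have := nest_ge K n Kn.
  have := hnormB_trans (c m) (c K) (c n); rewrite (hnormB (c K) (c n)).
  by move: (K.+1%:R^-1) => t; lra.
exists l => k; apply/ler_addgt0Pr => e e0.
have [M hM] := cvg_l e e0; set n := (M + k)%N.
have := hM n (leq_addr _ _); have := nest_ge k n (leq_addl _ _).
by have := hnormB_trans l (c n) (c k); rewrite (hnormB l (c n)); lra.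
Qed.

Lemma large_on_subball (a c : V) (r K : R) : 0 < r -> 0 <= K ->
  K + cmod (ip a c) + 1 < r / 2 * N a ->
  exists c', N (c' - c) <= r / 2 /\
    exists2 r', 0 < r' & forall z, N (z - c') <= r' -> K < cmod (ip a z).
Proof.
move=> r0 K0 big; set m := N a in big.
have m0 : 0 < m.
  rewrite lt_neqAle hnorm_ge0 andbT eq_sym; apply/eqP => m0.
  by move: big; rewrite m0 mulr0; have := cmod_ge0 (ip a c); lra.
set s := r / 2 / m; have s0 : 0 <= s by rewrite divr_ge0 ?divr_ge0 ?ltW.
exists (c + s%:C *: a); split.
  by rewrite addrC addKr hnormZ cmodR ger0_norm // divfK ?gt_eqF.
exists (m + 1)^-1 => [|z zc']; first by rewrite invr_gt0; lra.
have ip_c' : ip a (c + s%:C *: a) = ip a c + (r / 2 * m)%:C.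
  rewrite ipDr ipZr conjc_real ipxx -rmorphM /= /s -/m expr2 mulrA divfK ?gt_eqF //.
have far : K + 1 < cmod (ip a (c + s%:C *: a)).
  have := cmodD (ip a c + (r / 2 * m)%:C) (- ip a c).
  rewrite addrAC subrr add0r cmodN cmodR ger0_norm -?ip_c'; first lra.
  by rewrite mulr_ge0 ?divr_ge0 ?ltW.
have near : cmod (ip a z - ip a (c + s%:C *: a)) < 1.
  rewrite -ipBr; apply: le_lt_trans (cmod_ip_le (lexx m) zc') _.
  by rewrite ltr_pdivrMr ?mul1r; lra.
by have := cmodB (ip a z) (ip a z - ip a (c + s%:C *: a)); rewrite opprB addrC subrK; lra.
Qed.

(* If the norms were unbounded, there would be nested balls, the k-th of
   radius at most 1/(k+1), on which some [ip (w n)] exceeds k in modulus; at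
   their common point [l] the sequence [ip (w n) l] would be unbounded. *)
Lemma uniform_boundedness (w : nat -> V) :
  (forall z, exists K, forall n, cmod (ip (w n) z) <= K) ->
  exists B, forall n, N (w n) <= B.
Proof.
move=> w_pt; apply: contrapT => unbounded.
have big B : exists n, B < N (w n).
  apply: contrapT => small; apply: unbounded; exists B => n.
  by rewrite leNgt; apply/negP => Bn; apply: small; exists n.
have step (kb : nat * (V * R)) : exists b' : V * R, 0 < kb.2.2 ->
    [/\ 0 < b'.2, N (b'.1 - kb.2.1) + b'.2 <= kb.2.2, b'.2 <= kb.1.+1%:R^-1 &
      exists n, forall z, N (z - b'.1) <= b'.2 -> kb.1%:R < cmod (ip (w n) z)].
  case: kb => k [c r] /=; have [r0|] := ltrP 0 r; last by move=> r_le; exists (c, r); rewrite ltNge r_le.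
  have [Kc hKc] := w_pt c; have [n hn] := big (2 * (k%:R + `|Kc| + 1) / r).
  have [|c' [cc' [r' r'0 hr']]] := large_on_subball (w n) c r k%:R r0 (ler0n _ k).
    move: hn; rewrite ltr_pdivrMr // => hn.
    by have := hKc n; have := ler_norm Kc; lra.
  have k0 : 0 < k.+1%:R^-1 :> R by rewrite invr_gt0 ltr0n.
  exists (c', Num.min r' (Num.min (r / 2) k.+1%:R^-1)) => _ /=.
  split; rewrite ?lt_min ?ge_min ?lexx ?orbT ?r'0 ?divr_gt0 //.
  - have : Num.min r' (Num.min (r / 2) k.+1%:R^-1) <= r / 2.
      by rewrite !ge_min lexx orbT.
    lra.
  - by exists n => z zc'; apply: hr'; apply: le_trans zc' _; rewrite ge_min lexx.
have [next nextP] := choice step.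
pose fix ball k := if k is k'.+1 then next (k', ball k') else (0, 1).
have ball_pos k : 0 < (ball k).2.
  by elim: k => [|k IH] /=; [exact: ltr01 | have [] := nextP (k, ball k) IH].
have ballP k := nextP (k, ball k) (ball_pos k).
have [|||l l_in] := nested_balls_meet (fun k => (ball k.+1).1) (fun k => (ball k.+1).2).
- by move=> k; exact: ltW.
- by move=> k; have [] := ballP k.+1.
- by move=> k; have [] := ballP k.
have [Kl hKl] := w_pt l.
have [_ _ _ [n hn]] := ballP (Num.truncn Kl).+1.
have /= := hn l (l_in _); have := hKl n; have := truncnS_gt Kl; lra.
Qed.

Lemma hcauchy_of_sqr_bound (u : nat -> V) C :
  (forall m n, N (u m - u n) ^+ 2 <= C * (m.+1%:R^-1 + n.+1%:R^-1)) -> hcauchy ip u.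
Proof.
move=> bound eps e0; set C' := `|C| + 1.
have C'0 : 0 < C' by rewrite /C'; have := normr_ge0 C; lra.
have [K hK] := exists_inv_nat_lt (divr_gt0 (exprn_gt0 2 e0) (mulr_gt0 (ltr0Sn _ 1) C'0)).
exists K => m n /hK Km /hK Kn.
rewrite -(ltr_pXn2r (n := 2)) ?nnegrE ?hnorm_ge0 ?ltW //.
apply: le_lt_trans (bound m n) _.
have CC' : C <= C' by rewrite /C'; have := ler_norm C; lra.
have inv0 (k : nat) : 0 < k.+1%:R^-1 :> R by rewrite invr_gt0 ltr0n.
have := inv0 m; have := inv0 n; move: Km Kn; rewrite !ltr_pdivlMr ?mulr_gt0 //.
move: (m.+1%:R^-1) (n.+1%:R^-1) => a b Ka Kb a0 b0; nra.
Qed.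

(* A minimizing sequence for the distance from [p] to [S] is Cauchy by
   [hnorm_midpoint]; its limit [q] is no farther from [p] than any [q + t z]. *)
Lemma orthogonal_projection S p : subspace S ->
  exists2 q, in_closure S q & forall z, S z -> ip (p - q) z = 0.
Proof.
case=> S0 S_lin.
pose E : set R := fun d => exists2 z, S z & d = N (p - z).
have E_inf : has_inf E by split; [exists (N (p - 0)), 0 | exists 0 => _ [z _ ->]; exact: hnorm_ge0].
set dist := inf E.
have dist_le z : S z -> dist <= N (p - z) by move=> Sz; apply: (ge_inf E_inf.2); exists z.
have dist0 : 0 <= dist by apply: lb_le_inf E_inf.1 _ => _ [z _ ->]; exact: hnorm_ge0.
have inv0 (k : nat) : 0 < k.+1%:R^-1 :> R by rewrite invr_gt0 ltr0n.
have inv1 (k : nat) : k.+1%:R^-1 <= 1 :> R by rewrite invf_le1 ?ler1n.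
have near_dist k : exists z, S z /\ N (p - z) < dist + k.+1%:R^-1.
  by have [_ [z Sz ->] lt] := inf_adherent (inv0 k) E_inf; exists z.
have [zs zsP] := choice near_dist.
have S_mid m n : S (2^-1 *: (zs m + zs n)).
  rewrite -[_ *: _]addr0; apply: (S_lin) => //; rewrite -[zs m]scale1r.
  by apply: S_lin; [case: (zsP m) | case: (zsP n)].
have [q zs_q] : exists q, hcvg ip zs q.
  apply/Hcompl/(hcauchy_of_sqr_bound _ (4 * dist + 2)) => m n.
  have := hnorm_midpoint (zs m) (zs n) p; have := dist_le _ (S_mid m n).
  case: (zsP m) => _; case: (zsP n) => _.
  have := hnorm_ge0 ip (p - zs m); have := hnorm_ge0 ip (p - zs n).
  have := inv1 m; have := inv1 n; have := inv0 m; have := inv0 n.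
  move: (m.+1%:R^-1) (n.+1%:R^-1) => a b; nra.
exists q => [e e0|z Sz].
  by have [M /(_ M (leqnn M))] := zs_q e e0; exists (zs M); [case: (zsP M) | rewrite hnormB].
apply: orthogonal_of_min_dist => t; apply/ler_addgt0Pr => e e0.
have e2 : 0 < e / 2 by rewrite divr_gt0.
have e4 : 0 < e / 4 by rewrite divr_gt0.
have [M1 hM1] := exists_inv_nat_lt e2; have [M2 hM2] := zs_q _ e4.
set k := (M1 + M2)%N; have [Szk near_zk] := zsP k.
have := dist_le _ (S_lin t z (zs k) Sz Szk).
have := hnormB_trans p (q + t *: z) (t *: z + zs k).
rewrite addrKA [- (q + _)]opprD addrA.
have := hnormB_trans p (zs k) q; rewrite (hnormB q).
have := hM1 k (leq_addr _ _); have := hM2 k (leq_addl _ _).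
by move: near_zk; move: (k.+1%:R^-1) => a; lra.
Qed.

End Complete.
End InnerProduct.

Section GraphSpace.
Context {R : realType} {V : lmodType R[i]} {ip : V -> V -> R[i]}.
Hypothesis Hip : is_inner_product ip.
Local Notation N := (hnorm ip).

Definition graph_ip (x y : V * V) : R[i] := ip x.1 y.1 + ip x.2 y.2.

Local Notation NG := (hnorm graph_ip).

Lemma graph_ip_inner_product : is_inner_product graph_ip.
Proof.
split=> [t x y z | x y | x | [x1 x2]]; rewrite /graph_ip /=.
- by rewrite !(ipDl Hip) !(ipZl Hip); ring.
- by rewrite rmorphD /= -!(ipC Hip).
- by rewrite !(ipxx Hip) -rmorphD /=; split; rewrite // addr_ge0 ?sqr_ge0.
rewrite !(ipxx Hip) -rmorphD /= => /complexI /eqP.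
rewrite paddr_eq0 ?sqr_ge0 // !sqrf_eq0.
by case/andP=> /eqP/(hnorm_eq0 Hip)-> /eqP/(hnorm_eq0 Hip)->.
Qed.

Lemma graph_hnorm_sqr x : NG x ^+ 2 = N x.1 ^+ 2 + N x.2 ^+ 2.
Proof.
have ReG : complex.Re (graph_ip x x) = N x.1 ^+ 2 + N x.2 ^+ 2.
  by rewrite /graph_ip !(ipxx Hip).
by rewrite {1}/hnorm ReG sqr_sqrtr // addr_ge0 ?sqr_ge0.
Qed.

Lemma hnorm_fst_le x : N x.1 <= NG x.
Proof.
rewrite -(ler_pXn2r (n := 2)) ?nnegrE ?hnorm_ge0 // graph_hnorm_sqr.
by rewrite lerDl sqr_ge0.
Qed.

Lemma hnorm_snd_le x : N x.2 <= NG x.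
Proof.
rewrite -(ler_pXn2r (n := 2)) ?nnegrE ?hnorm_ge0 // graph_hnorm_sqr.
by rewrite lerDr sqr_ge0.
Qed.

Lemma graph_hnorm_le x : NG x <= N x.1 + N x.2.
Proof.
rewrite -(ler_pXn2r (n := 2)) ?nnegrE ?addr_ge0 ?hnorm_ge0 // graph_hnorm_sqr.
by rewrite sqrrD addrAC lerDl mulrn_wge0 // mulr_ge0 ?hnorm_ge0.
Qed.

Lemma graph_complete : hcomplete ip -> hcomplete graph_ip.
Proof.
move=> Hcompl u u_cauchy.
have [l1 cvg1] : exists l, hcvg ip (fun n => (u n).1) l.
  apply: Hcompl => e e0; have [M hM] := u_cauchy e e0.
  by exists M => m n Mm Mn; exact: le_lt_trans (hnorm_fst_le (u m - u n)) (hM m n Mm Mn).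
have [l2 cvg2] : exists l, hcvg ip (fun n => (u n).2) l.
  apply: Hcompl => e e0; have [M hM] := u_cauchy e e0.
  by exists M => m n Mm Mn; exact: le_lt_trans (hnorm_snd_le (u m - u n)) (hM m n Mm Mn).
exists (l1, l2) => e e0; have e2 : 0 < e / 2 by rewrite divr_gt0.
have [M1 hM1] := cvg1 _ e2; have [M2 hM2] := cvg2 _ e2.
exists (M1 + M2)%N => n n_big; apply: le_lt_trans (graph_hnorm_le _) _.
have := hM1 n (leq_trans (leq_addr _ _) n_big).
by have := hM2 n (leq_trans (leq_addl _ _) n_big); rewrite /=; lra.
Qed.

Definition graph (A : op V) (x : V * V) := dom A x.1 /\ x.2 = app A x.1.

Lemma graph_subspace A : linear_op A -> subspace (graph A).
Proof.
case=> A0 A_add A_scale; split.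
  by have [_] := A_scale 0 0 A0; rewrite !scale0r.
move=> t [x1 x2] [y1 y2] [/= Ax1 ->] [/= Ay1 ->]; rewrite /graph /=.
have [Atx Atx_eq] := A_scale t x1 Ax1; have [Asum ->] := A_add _ _ Atx Ay1.
by split; last rewrite Atx_eq.
Qed.

Lemma in_graph_closureE {A x y} :
  in_closure (ip := graph_ip) (graph A) (x, y) -> in_graph_closure ip A x y.
Proof.
move=> cl e e0; have [[u Au] [/= dAu ->] near] := cl e e0.
exists u; split; [|split] => //.
  exact: le_lt_trans (hnorm_fst_le ((x, y) - (u, app A u))) near.
exact: le_lt_trans (hnorm_snd_le ((x, y) - (u, app A u))) near.
Qed.

End GraphSpace.

Section Operators.
Context {R : realType} {V : lmodType R[i]} {ip : V -> V -> R[i]}.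
Hypothesis Hip : is_inner_product ip.
Local Notation N := (hnorm ip).

Lemma orthogonal_graph_closure (B : op V) x y a b : in_graph_closure ip B x y ->
  (forall u, dom B u -> ip a u + ip b (app B u) = 0) -> ip a x + ip b y = 0.
Proof.
move=> cl orth; apply: cmod_le_eq0 => e e0; set d := N a + N b + 1.
have d0 : 0 < d by rewrite /d; have := hnorm_ge0 ip a; have := hnorm_ge0 ip b; lra.
have [u [Bu [xu yu]]] := cl _ (divr_gt0 e0 d0).
have -> : ip a x + ip b y = ip a (x - u) + ip b (y - app B u).
  by rewrite !(ipBr Hip) -[LHS]subr0 -(orth u Bu); ring.
have := cmodD (ip a (x - u)) (ip b (y - app B u)).
have := cmod_ip_le Hip (lexx (N a)) (ltW xu); have := cmod_ip_le Hip (lexx (N b)) (ltW yu).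
have : N a * (e / d) + N b * (e / d) <= e.
  by rewrite -mulrDl mulrA ler_pdivrMr // /d; nra.
lra.
Qed.

Section Adjoint.
Context {A Abar Astar : op V}.
Hypotheses (HAbar : is_closure ip A Abar) (HAstar : is_adjoint ip A Astar).

Lemma sub_closure : op_sub A Abar.
Proof. by move=> x Ax; apply/HAbar => d d0; exists x; rewrite !subrr (hnorm0 Hip). Qed.

Lemma closure_densely_defined : densely_defined ip A -> densely_defined ip Abar.
Proof.
move=> A_dense x e e0; have [u [Au xu]] := A_dense x e e0.
by exists u; split=> //; have [] := sub_closure _ Au.
Qed.

Lemma adjointE {x y} : dom Astar y -> dom A x ->
  ip (app A x) y = ip x (app Astar y).
Proof. by move=> Ay; apply: (HAstar y _).1. Qed.

Lemma adjoint_closure {x y} : dom Abar x -> dom Astar y ->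
  ip (app Abar x) y = ip x (app Astar y).
Proof.
move=> Abx Ay; have cl : in_graph_closure ip A x (app Abar x) by apply/HAbar.
have orth u : dom A u -> ip (- app Astar y) u + ip y (app A u) = 0.
  by move=> Au; rewrite (ipNl Hip) (ipC Hip (app A u)) (adjointE Ay Au) -(ipC Hip) addNr.
have /eqP := orthogonal_graph_closure _ _ _ _ _ cl orth.
rewrite (ipNl Hip) addrC subr_eq0 => /eqP eq.
by rewrite (ipC Hip y) eq -(ipC Hip).
Qed.

Lemma adjointB {y1 y2} : dom Astar y1 -> dom Astar y2 ->
  dom Astar (y1 - y2) /\ app Astar (y1 - y2) = app Astar y1 - app Astar y2.
Proof.
move=> Ay1 Ay2; apply/HAstar => x Ax.
by rewrite !(ipBr Hip) (adjointE Ay1 Ax) (adjointE Ay2 Ax).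
Qed.

Section ClosedExtension.
Context {B Bbar : op V}.
Hypotheses (HBA : op_sub B Astar) (HBbar : is_closure ip B Bbar).

Lemma closure_sub_adjoint : op_sub Bbar Astar.
Proof.
move=> x Bbx; have cl : in_graph_closure ip B x (app Bbar x) by apply/HBbar.
apply/HAstar => a Aa.
have orth u : dom B u -> ip (app A a) u + ip (- a) (app B u) = 0.
  move=> Bu; have [Au <-] := HBA u Bu.
  by rewrite (adjointE Au Aa) (ipNl Hip) subrr.
have /eqP := orthogonal_graph_closure _ _ _ _ _ cl orth.
by rewrite (ipNl Hip) subr_eq0 => /eqP.
Qed.

Lemma exists_graph_orthogonal : hcomplete ip -> linear_op B ->
  forall y, dom Astar y -> exists2 y0, dom Bbar y0 &
    forall z, dom B z -> ip (y - y0) z + ip (app Astar (y - y0)) (app B z) = 0.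
Proof.
move=> Hcompl B_lin y Ay.
have [[y0 w] cl orth] := orthogonal_projection (graph_ip_inner_product Hip)
  (graph_complete Hip Hcompl) (graph B) (y, app Astar y) (graph_subspace _ B_lin).
have [Bby0 w_eq] := (HBbar y0 w).2 (in_graph_closureE Hip cl).
exists y0 => // z Bz.
have [Ay0 Ay0_eq] := closure_sub_adjoint _ Bby0.
have [_ ->] := adjointB Ay Ay0; rewrite Ay0_eq w_eq.
exact: orth (z, app B z) (conj Bz erefl).
Qed.

End ClosedExtension.

Section Approximation.
Context {A0 A0bar : op V} {T Tstar : nat -> V -> V}.
Hypotheses (Hcompl : hcomplete ip) (HA_dense : densely_defined ip A)
  (HA0sub : op_sub A0 Astar) (HA0bar : is_closure ip A0 A0bar)
  (HTstar : forall n x y, ip (T n x) y = ip x (Tstar n y))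
  (HWOT : forall x y, ccv (fun n => ip (T n x) y) (ip x y))
  (HRT : forall n x, dom Abar (T n x))
  (HRTstar : forall n x, dom A0bar (Tstar n x))
  (Hcomm : exists M : R, forall n f, dom Abar f -> dom Abar (T n f) ->
     N (app Abar (T n f) - T n (app Abar f)) <= M * N f).

Lemma adjoint_Tstar n y :
  dom Astar (Tstar n y) /\ app Astar (Tstar n y) = app A0bar (Tstar n y).
Proof. exact: closure_sub_adjoint HA0sub HA0bar _ (HRTstar n y). Qed.

Lemma Tstar_bounded y : exists K, forall n, N (Tstar n y) <= K.
Proof.
apply: (uniform_boundedness Hip Hcompl) => z.
have [K hK] := ccv_bounded (HWOT z y); exists K => n.
by rewrite (ipC Hip) -HTstar cmodJ.
Qed.

(* Against [x] in [dom Abar], [A^* T_n^* y] acts as [T_n^* A^* y] up to the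
   commutator [Abar T_n - T_n Abar], whose norms are uniformly bounded. *)
Lemma adjoint_Tstar_bounded {y} : dom Astar y ->
  exists K, forall n, N (app Astar (Tstar n y)) <= K.
Proof.
move=> Ay; have [K hK] := Tstar_bounded (app Astar y); have [M hM] := Hcomm.
have K0 : 0 <= K := le_trans (hnorm_ge0 ip _) (hK 0%N).
exists (K + `|M| * N y) => n; have [ATy _] := adjoint_Tstar n y.
apply: (hnorm_le_of_dense Hip (closure_densely_defined HA_dense)) => [|x Abx].
  by rewrite addr_ge0 ?mulr_ge0 ?hnorm_ge0.
set C := app Abar (T n x) - T n (app Abar x).
have -> : ip x (app Astar (Tstar n y)) = ip x (Tstar n (app Astar y)) - ip C y.
  rewrite -(adjoint_closure Abx ATy) -!HTstar -(adjoint_closure (HRT n x) Ay).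
  by rewrite /C (ipBl Hip); ring.
have C_le : N C <= `|M| * N x.
  by apply: le_trans (hM n x Abx (HRT n x)) _; rewrite ler_wpM2r ?hnorm_ge0 ?ler_norm.
have := cmodB (ip x (Tstar n (app Astar y))) (ip C y).
have := cmod_ip_le Hip (lexx (N x)) (hK n); have := cmod_ip_le Hip C_le (lexx (N y)).
by have := hnorm_ge0 ip x; nra.
Qed.

Lemma adjoint_Tstar_cvg {y} : dom Astar y -> forall x, dom Abar x ->
  ccv (fun n => ip x (app Astar (Tstar n y))) (ip x (app Astar y)).
Proof.
move=> Ay x Abx e e0; have [M hM] := HWOT (app Abar x) y e e0.
exists M => n /hM; have [ATy _] := adjoint_Tstar n y.
by rewrite -!adjoint_closure // HTstar.
Qed.

Lemma graph_orthogonal_eq0 {y} : dom Astar y ->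
  (forall z, dom A0 z -> ip y z + ip (app Astar y) (app A0 z) = 0) -> y = 0.
Proof.
move=> Ay orth.
have orth_bar z : dom A0bar z -> ip y z + ip (app Astar y) (app A0bar z) = 0.
  by move=> A0bz; apply: orthogonal_graph_closure orth; apply/HA0bar.
have orth_Tstar n : ip y (Tstar n y) + ip (app Astar y) (app Astar (Tstar n y)) = 0.
  by have [_ ->] := adjoint_Tstar n y; apply: orth_bar.
have cvg1 : ccv (fun n => ip y (Tstar n y)) (ip y y).
  by move=> e e0; have [M hM] := HWOT y y e e0; exists M => n; rewrite -HTstar; apply: hM.
have [K hK] := adjoint_Tstar_bounded Ay.
have cvg2 := ccv_ip_of_dense Hip (closure_densely_defined HA_dense) hK
  (adjoint_Tstar_cvg Ay) (app Astar y).
have := ccv_add_eq0 cvg1 cvg2 orth_Tstar.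
rewrite !(ipxx Hip) -rmorphD /= => /complexI /eqP.
by rewrite paddr_eq0 ?sqr_ge0 // sqrf_eq0 => /andP[/eqP/(hnorm_eq0 Hip)].
Qed.

End Approximation.
End Adjoint.
End Operators.

Theorem theorem1 (R : realType) (V : lmodType R[i]) (ip : V -> V -> R[i])
  (Hip : is_inner_product ip) (Hcompl : hcomplete ip)
  (A Abar Astar A0 A0bar : op V)
  (HAlin : linear_op A) (HAdense : densely_defined ip A)
  (HAbar : is_closure ip A Abar) (HAstar : is_adjoint ip A Astar)
  (HA0lin : linear_op A0) (HA0sub : op_sub A0 Astar)
  (HA0bar : is_closure ip A0 A0bar)
  (T Tstar : nat -> V -> V)
  (HT : forall n, bounded_op ip (T n))
  (HTstar : forall n x y, ip (T n x) y = ip x (Tstar n y))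
  (HWOT : forall x y eps, 0 < eps ->
     exists N, forall n, (N <= n)%N -> cmod (ip (T n x) y - ip x y) < eps)
  (HRT : forall n x, dom Abar (T n x))
  (HRTstar : forall n x, dom A0bar (Tstar n x))
  (Hcomm : exists M : R, forall n f, dom Abar f -> dom Abar (T n f) ->
     hnorm ip (app Abar (T n f) - T n (app Abar f)) <= M * hnorm ip f) :
  op_eq A0bar Astar.
Proof.
have A0bar_sub := closure_sub_adjoint Hip HAstar HA0sub HA0bar.
split; first exact: A0bar_sub.
move=> y Ay.
have [y0 A0by0 orth] :=
  exists_graph_orthogonal Hip HAstar HA0sub HA0bar Hcompl HA0lin y Ay.
have [Ay0 Ay0_eq] := A0bar_sub y0 A0by0.
have [Ay_y0 _] := adjointB Hip HAstar Ay Ay0.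
have /subr0_eq -> : y - y0 = 0.
  exact: (graph_orthogonal_eq0 Hip HAbar HAstar Hcompl HAdense HA0sub HA0bar
    HTstar HWOT HRT HRTstar Hcomm Ay_y0 orth).
by split=> //; rewrite Ay0_eq.
Qed.
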